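(* Let $\mathcal{X},\mathcal{Y}$ be finite sets, $\mathcal{T}=\mathbb{N}$, and let $p(X,Y)\in\Delta_{\mathcal{X}\times\mathcal{Y}}$ with $p(X)$ of full support. Put $\Lambda:=I(X;Y)$ and, for $0\le\lambda\le\Lambda$, $$\mathrm{IB}(\lambda):=\operatorname{argmin}\{\, I_q(X;T) \;:\; q(T|X)\in C(\mathcal{X},\mathcal{T}),\ I_q(T;Y)\ge \lambda\,\}.$$ Then for every $\sigma\in\mathrm{Bij}(\mathcal{X})$: (i) $\mathrm{IB}(\Lambda)=\{\gamma\circ\pi_{\mathcal{X}} : \gamma\in C_{\mathrm{cong}}(\bar{\mathcal{X}},\mathcal{T})\}$; (ii) if $\kappa\in\mathrm{IB}(\Lambda)$, then $\sigma\in G_{\mathrm{ci}}$ if and only if $\kappa\circ\sigma=\kappa$; (iii) if $\sigma\in G_{\mathrm{ci}}$, then $\kappa\circ\sigma=\kappa$ for every $0\le\lambda\le\Lambda$ and every $\kappa\in\mathrm{IB}(\lambda)$; (iv) the partition $\bar{\mathcal{X}}$ coincides with the partition of $\mathcal{X}$ into $G_{\mathrm{ci}}$-orbits, i.e. $\pi_{\mathcal{X}}$ coincides with the projection on orbits $\pi_{\mathrm{ci}}:\mathcal{X}\to\mathcal{X}/G_{\mathrm{ci}}$.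
   Context: All alphabets are finite except $\mathcal{T}=\mathbb{N}$. $\Delta_{\mathcal{A}}$ is the probability simplex on $\mathcal{A}$; $C(\mathcal{A},\mathcal{B})$ is the set of channels (conditional probabilities) $\kappa(b|a)$ from $\mathcal{A}$ to $\mathcal{B}$; functions are viewed as deterministic channels, and $\circ$ denotes channel composition $(\mu\circ\kappa)(c|a)=\sum_b\mu(c|b)\kappa(b|a)$. $\mathrm{Bij}(\mathcal{A})$ is the set of bijections of $\mathcal{A}$ and $e_{\mathcal{A}}$ the identity. A channel $\gamma\in C(\mathcal{A},\mathcal{B})$ is congruent, written $\gamma\in C_{\mathrm{cong}}(\mathcal{A},\mathcal{B})$, if there is a function $f:\mathcal{B}\to\mathcal{A}$ with $f\circ\gamma=e_{\mathcal{A}}$. For $q(T|X)\in C(\mathcal{X},\mathcal{T})$, the joint distribution is $q(x,y,t):=p(x,y)q(t|x)$ (Markov chain $T-X-Y$), and $I_q$ denotes mutual information under it. The channel invariance group $G_{\mathrm{ci}}$ is the group of $\sigma\in\mathrm{Bij}(\mathcal{X})$ with $p(Y|X)\circ\sigma=p(Y|X)$, i.e. $p(Y|\sigma(x))=p(Y|x)$ for all $x$. The equivalence relation $x\sim_{\mathcal{X}}x'\iff p(Y|x)=p(Y|x')$ has partition $\bar{\mathcal{X}}$ and projection $\pi_{\mathcal{X}}:\mathcal{X}\to\bar{\mathcal{X}}$. *)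

From HB Require Import structures.
From mathcomp Require Import all_boot all_order all_algebra all_fingroup.
From mathcomp Require Import all_classical all_reals all_analysis.
Set Implicit Arguments. Unset Strict Implicit. Unset Printing Implicit Defensive.
Import Order.TTheory GRing.Theory Num.Theory.
Local Open Scope ring_scope.

Section IB.
Variables (R : realType) (X Y : finType).

Definition is_joint (p : X -> Y -> R) : Prop :=
  (forall x y, 0 <= p x y) /\ \sum_x \sum_y p x y = 1.

Definition pX (p : X -> Y -> R) (x : X) : R := \sum_y p x y.
Definition pY (p : X -> Y -> R) (y : Y) : R := \sum_x p x y.
Definition pcond (p : X -> Y -> R) (x : X) (y : Y) : R := p x y / pX p x.

Definition plogq (a b : R) : R := if a == 0 then 0 else a * ln (a / b).

Definition MI_XY (p : X -> Y -> R) : R :=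
  \sum_x \sum_y plogq (p x y) (pX p x * pY p y).

Definition channel (A : Type) (k : A -> nat -> R) : Prop :=
  (forall a t, 0 <= k a t) /\
  (forall a, (\sum_(0 <= t <oo) (k a t)%:E)%E = 1%E).

(* quantities under q(x,y,t) = p(x,y) q(t|x) *)
Definition qT (p : X -> Y -> R) (q : X -> nat -> R) (t : nat) : R :=
  \sum_x pX p x * q x t.
Definition qTY (p : X -> Y -> R) (q : X -> nat -> R) (t : nat) (y : Y) : R :=
  \sum_x p x y * q x t.

Definition MI_XT (p : X -> Y -> R) (q : X -> nat -> R) : \bar R :=
  (\sum_(0 <= t <oo)
     (\sum_x plogq (pX p x * q x t) (pX p x * qT p q t))%:E)%E.

Definition MI_TY (p : X -> Y -> R) (q : X -> nat -> R) : \bar R :=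
  (\sum_(0 <= t <oo)
     (\sum_y plogq (qTY p q t y) (qT p q t * pY p y))%:E)%E.

Definition IB (p : X -> Y -> R) (lam : R) (k : X -> nat -> R) : Prop :=
  channel k /\ (lam%:E <= MI_TY p k)%E /\
  forall q : X -> nat -> R, channel q -> (lam%:E <= MI_TY p q)%E ->
    (MI_XT p k <= MI_XT p q)%E.

Definition in_Gci (p : X -> Y -> R) (s : {perm X}) : Prop :=
  forall x y, pcond p (s x) y = pcond p x y.

Definition simX (p : X -> Y -> R) (x x' : X) : bool :=
  [forall y, pcond p x y == pcond p x' y].
Definition eqclass (p : X -> Y -> R) (x : X) : {set X} :=
  [set x' | simX p x x'].
Definition Xbar (p : X -> Y -> R) : finType :=
  {A : {set X} | [exists x, A == eqclass p x]}.
Definition piX (p : X -> Y -> R) (x : X) : Xbar p :=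
  exist _ (eqclass p x)
    (introT existsP (ex_intro (fun x0 => eqclass p x == eqclass p x0) x (eqxx _))).

(* composition of the deterministic channel f : nat -> A after gamma,
   (f o gamma)(a'|a) = sum_t [f t = a'] gamma(t|a) *)
Definition congruent (A : finType) (g : A -> nat -> R) : Prop :=
  exists f : nat -> A, forall a a' : A,
    (\sum_(0 <= t <oo) (if f t == a' then g a t else 0)%:E)%E
      = ((a == a')%:R)%:E.

End IB.

(* For any channel q, the log-sum inequality applied over x, for each output t
   and label y, bounds the summand of I_q(T;Y) at t by
   sum_x p(x) q(t|x) D(p(Y|x) || p(Y)), whose sum over t is I(X;Y); equality
   holds exactly when every output t is reached from a single class of ~.
   Averaging q(t|.) over the classes of ~ keeps I_q(T;Y) and, by the log-sum
   inequality on each class, does not increase I_q(X;T), with equality exactly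
   when q(t|.) is constant on classes.  A channel that is both separating and
   class-invariant has I_q(X;T) = H(pi(X)), the value of the labelling channel
   x |-> pi(x), which is feasible for every lambda <= Lambda.  Hence every
   minimiser at any lambda <= Lambda is class-invariant, the minimisers at
   Lambda are exactly the separating class-invariant channels, i.e. the
   congruent channels composed with pi, and the four claims follow since
   sigma is in G_ci iff sigma(x) ~ x for all x. *)

From mathcomp Require Import all_boot all_order all_algebra all_fingroup.
From mathcomp Require Import all_classical all_reals all_analysis.
From mathcomp Require Import ring.
Set Implicit Arguments. Unset Strict Implicit. Unset Printing Implicit Defensive.
Import Order.TTheory GRing.Theory Num.Theory.
Local Open Scope ring_scope.

Section LogSum.
Variable R : realType.
Implicit Types a b c u : R.

Lemma leif_ln_subr1 u : 0 < u -> ln u <= u - 1 ?= iff (u == 1).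
Proof.
move=> u_gt0; apply/leifP; have [->|u_neq1] := eqVneq u 1; first by rewrite ln1 subrr.
have := @expR_gt1Dx R (ln u); rewrite lnK ?posrE // ln_eq0 // u_neq1 => /(_ isT).
by rewrite ltrBrDl.
Qed.

Lemma plogq0 b : plogq 0 b = 0 :> R.
Proof. by rewrite /plogq eqxx. Qed.

Lemma plogqxx a : plogq a a = 0.
Proof. by rewrite /plogq; case: eqP => // /eqP a0; rewrite divff // ln1 mulr0. Qed.

Lemma plogqMl c a b : 0 <= c -> plogq (c * a) (c * b) = c * plogq a b.
Proof.
rewrite le0r => /orP[/eqP->|c_gt0]; first by rewrite !mul0r plogq0.
rewrite /plogq mulf_eq0 (gt_eqF c_gt0) /=; case: eqP => _; first by rewrite mulr0.
by rewrite invfM mulrACA divff ?(gt_eqF c_gt0) // mul1r mulrA.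
Qed.

(* The tangent line of [b |-> a ln (a / b)] at [b = a / c]. *)
Lemma leif_plogq_tangent a b c : 0 <= a -> 0 <= b -> (b = 0 -> a = 0) -> 0 < c ->
  a * ln c + a - b * c <= plogq a b ?= iff (a == b * c).
Proof.
move=> a_ge0 b_ge0 ba c_gt0; have [->|a_neq0] := eqVneq a 0.
  rewrite plogq0 mul0r !add0r eq_sym; apply/leifP; case: eqP => [->|/eqP bc_neq0].
    by rewrite oppr0.
  by rewrite oppr_lt0 lt0r bc_neq0 mulr_ge0 // ltW.
have a_gt0 : 0 < a by rewrite lt0r a_neq0.
have b_gt0 : 0 < b by rewrite lt0r b_ge0 andbT; apply: contra a_neq0 => /eqP/ba ->.
set u := b * c / a; have u_gt0 : 0 < u by rewrite !mulr_gt0 ?invr_gt0.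
have lhsE : a * ln c + a - b * c = a * ln c - a * (u - 1).
  by rewrite /u; field; rewrite gt_eqF.
have rhsE : plogq a b = a * ln c - a * ln u.
  rewrite /plogq (negPf a_neq0) -mulrBr -ln_div ?posrE //.
  by congr (_ * ln _); rewrite /u; field; rewrite !gt_eqF.
have uE : (u == 1) = (a == b * c).
  by rewrite /u; apply/eqP/eqP => [/divr1_eq ->|<-] //; rewrite divff ?gt_eqF.
rewrite lhsE rhsE -uE (mono_leif (lerD2l (a * ln c))) (nmono_leif (@lerN2 R)).
by rewrite (mono_leif (ler_pM2l a_gt0)); exact: leif_ln_subr1.
Qed.

Lemma leif_log_sum (I : finType) (P : pred I) (a b : I -> R) :
  (forall i, P i -> 0 <= a i) -> (forall i, P i -> 0 <= b i) ->
  (forall i, P i -> b i = 0 -> a i = 0) ->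
  plogq (\sum_(i | P i) a i) (\sum_(i | P i) b i) <= \sum_(i | P i) plogq (a i) (b i)
    ?= iff [forall (i | P i), a i * \sum_(j | P j) b j == (\sum_(j | P j) a j) * b i].
Proof.
move=> a_ge0 b_ge0 ba; set A := \sum_(i | P i) a i; set B := \sum_(i | P i) b i.
have [A0|A_neq0] := eqVneq A 0.
  have a0 i : P i -> a i = 0 by move=> Pi; apply: (psumr_eq0P a_ge0 A0).
  rewrite A0 plogq0 big1 => [|i Pi]; last by rewrite a0 // plogq0.
  by apply/leif_refl/forall_inP => i Pi; rewrite a0 // !mul0r.
have [i Pi ai_neq0] : exists2 i, P i & a i != 0.
  apply/exists_inP; apply: contra_neqT A_neq0 => /exists_inPn a0.
  by rewrite /A big1 // => i /a0/negbNE/eqP.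
have B_gt0 : 0 < B.
  have bi_gt0 : 0 < b i by rewrite lt0r b_ge0 // andbT; apply: contra ai_neq0 => /eqP/ba ->.
  apply: (lt_le_trans bi_gt0); rewrite /B (bigD1 i) //= lerDl sumr_ge0 // => j /andP[Pj _].
  exact: b_ge0.
have c_gt0 : 0 < A / B.
  by rewrite divr_gt0 // lt0r A_neq0 sumr_ge0.
have -> : plogq A B = \sum_(i | P i) (a i * ln (A / B) + a i - b i * (A / B)).
  rewrite !big_split /= sumrN -!mulr_suml -/A -/B /plogq (negPf A_neq0).
  by field; rewrite gt_eqF.
have -> : [forall (j | P j), a j * B == A * b j] = [forall (j | P j), a j == b j * (A / B)].
  apply: eq_forallb => j; congr (_ ==> _); apply/eqP/eqP => e.
    by rewrite -[a j](mulfK (lt0r_neq0 B_gt0)) e; field; rewrite gt_eqF.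
  by rewrite e; field; rewrite gt_eqF.
by apply: leif_sum => j Pj; apply: leif_plogq_tangent; auto.
Qed.

End LogSum.

Section NonnegSeries.
Variable R : realType.
Local Open Scope ereal_scope.

Lemma nneseries_ge_term (f : nat -> \bar R) n : (forall k, 0 <= f k) ->
  f n <= \sum_(0 <= k <oo) f k.
Proof.
move=> f_ge0; rewrite (@nneseriesD1 _ _ n xpredT) // leeDl //.
exact: nneseries_ge0.
Qed.

Lemma nneseries_le_eq (u v : nat -> R) : (forall k, (0 <= u k)%R) -> (forall k, (u k <= v k)%R) ->
  \sum_(0 <= k <oo) (v k)%:E <= \sum_(0 <= k <oo) (u k)%:E ->
  \sum_(0 <= k <oo) (u k)%:E < +oo -> u =1 v.
Proof.
move=> u_ge0 uv vu u_fin n.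
have d_ge0 k : 0 <= (v k - u k)%:E by rewrite lee_fin subr_ge0.
have vE : \sum_(0 <= k <oo) (v k)%:E =
    \sum_(0 <= k <oo) (u k)%:E + \sum_(0 <= k <oo) (v k - u k)%:E.
  rewrite -nneseriesD => [|k _ _|k _ _] //; last by rewrite lee_fin.
  by apply: eq_eseriesr => k _; rewrite -EFinD addrC subrK.
have S_fin : \sum_(0 <= k <oo) (u k)%:E \is a fin_num.
  by rewrite ge0_fin_numE // nneseries_ge0 // => k _ _; rewrite lee_fin.
have D_le0 : \sum_(0 <= k <oo) (v k - u k)%:E <= 0.
  by rewrite -(leeD2lE _ _ S_fin) adde0 -vE.
have := le_trans (nneseries_ge_term n d_ge0) D_le0.
by rewrite lee_fin subr_le0 => vu_n; apply/eqP; rewrite eq_le uv.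
Qed.

Lemma eseries_indicator n : \sum_(0 <= k <oo) ((k == n)%:R : R)%:E = 1.
Proof.
have ind_ge0 k : 0 <= ((k == n)%:R : R)%:E by rewrite lee_fin.
rewrite (@nneseriesD1 _ _ n xpredT) // eqxx eseries0 ?adde0 // => k _ /negPf ->.
by rewrite mulr0n.
Qed.

End NonnegSeries.

Section Channels.
Variable R : realType.

Lemma channel_ge0 (A : Type) (q : A -> nat -> R) : channel q -> forall a t, 0 <= q a t.
Proof. by case. Qed.

Lemma channel_mass (A : Type) (q : A -> nat -> R) : channel q ->
  forall a, (\sum_(0 <= t <oo) (q a t)%:E = 1)%E.
Proof. by case. Qed.

Lemma channel_support (A : Type) (q : A -> nat -> R) : channel q ->
  forall a, exists t, 0 < q a t.
Proof.
move=> chq a; apply: contrapT => /forallNP q0.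
have q_eq0 t : q a t = 0.
  by apply/eqP; rewrite eq_le channel_ge0 // andbT leNgt; apply/negP/q0.
move: (channel_mass chq a); rewrite eseries0 // => [/eqP|t _ _]; last by rewrite q_eq0.
by rewrite eq_sym onee_eq0.
Qed.

Lemma channel_mixture (A : finType) (q : A -> nat -> R) (c : A -> R) :
  channel q -> (forall a, 0 <= c a) ->
  (\sum_(0 <= t <oo) (\sum_a c a * q a t)%:E = (\sum_a c a)%:E)%E.
Proof.
move=> chq c_ge0; under eq_eseriesr do rewrite -sumEFin.
rewrite nneseries_sum => [|a t _]; last by rewrite lee_fin mulr_ge0 ?channel_ge0.
rewrite -sumEFin; apply: eq_bigr => a _; under eq_eseriesr do rewrite EFinM.
rewrite nneseriesZl => [|t _]; last by rewrite lee_fin channel_ge0.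
by rewrite channel_mass // mule1.
Qed.

Definition disjoint_supports (A : Type) (g : A -> nat -> R) : Prop :=
  forall a a' t, 0 < g a t -> 0 < g a' t -> a = a'.

Lemma congruent_disjoint_supports (A : finType) (g : A -> nat -> R) :
  channel g -> congruent g -> disjoint_supports g.
Proof.
move=> chg [f fK]; suff fE a t : 0 < g a t -> f t = a.
  by move=> a a' t /fE <- /fE.
move=> ga_gt0; apply/eqP; apply: contraT => fta.
have term_ge0 k : (0 <= (if f k == f t then g a k else 0)%:E)%E.
  by case: ifP; rewrite lee_fin // channel_ge0.
have := nneseries_ge_term t term_ge0.
by rewrite fK eq_sym (negPf fta) eqxx lee_fin leNgt ga_gt0.
Qed.

Lemma congruent_of_disjoint_supports (A : finType) (a0 : A) (g : A -> nat -> R) :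
  channel g -> disjoint_supports g -> congruent g.
Proof.
move=> chg dg; exists (fun t => odflt a0 [pick a | 0 < g a t]) => a a'.
have termE t : (if odflt a0 [pick a | 0 < g a t] == a' then g a t else 0)
    = (a == a')%:R * g a t.
  have [ga0|ga_gt0] := eqVneq (g a t) 0; first by rewrite ga0 mulr0; case: ifP.
  case: pickP => [a1 ga1_gt0|/(_ a)]; last by rewrite lt0r ga_gt0 channel_ge0.
  rewrite (dg a1 a t ga1_gt0) ?lt0r ?ga_gt0 ?channel_ge0 //.
  by case: eqP; rewrite ?mul1r ?mul0r.
under eq_eseriesr do rewrite termE EFinM.
by rewrite nneseriesZl ?channel_mass ?mule1 // => t _; rewrite lee_fin channel_ge0.
Qed.

End Channels.

Section InformationBottleneck.
Variables (R : realType) (X Y : finType) (p : X -> Y -> R).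
Hypotheses (p_joint : is_joint p) (pX_gt0 : forall x, 0 < pX p x).

Local Notation sim := (simX p).

Lemma p_ge0 x y : 0 <= p x y. Proof. by case: p_joint. Qed.

Lemma sum_pX : \sum_x pX p x = 1. Proof. by case: p_joint. Qed.

Lemma sum_pY : \sum_y pY p y = 1.
Proof. by rewrite /pY exchange_big; case: p_joint. Qed.

Lemma pY_ge0 y : 0 <= pY p y.
Proof. by rewrite sumr_ge0 // => x _; exact: p_ge0. Qed.

Lemma pY_eq0 x y : pY p y = 0 -> p x y = 0.
Proof. by move=> pY0; apply: (psumr_eq0P _ pY0) => // z _; exact: p_ge0. Qed.

Lemma pX_pcond x y : p x y = pX p x * pcond p x y.
Proof. by rewrite /pcond mulrC divfK ?gt_eqF. Qed.

Lemma pcond_eq0 x y : pY p y = 0 -> pcond p x y = 0.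
Proof. by move/(pY_eq0 x); rewrite /pcond => ->; rewrite mul0r. Qed.

Lemma pcond_ge0 x y : 0 <= pcond p x y.
Proof. by rewrite divr_ge0 ?p_ge0 ?ltW. Qed.

Lemma sum_pcond x : \sum_y pcond p x y = 1.
Proof. by rewrite /pcond -mulr_suml -/(pX p x) divff ?gt_eqF. Qed.

Lemma simP x x' : reflect (pcond p x =1 pcond p x') (sim x x').
Proof. by apply: (iffP forallP) => h y; apply/eqP. Qed.

Lemma sim_refl : reflexive sim.
Proof. by move=> x; apply/simP. Qed.

Lemma sim_sym : symmetric sim.
Proof. by move=> x x'; apply/simP/simP => h y. Qed.

Lemma sim_trans : transitive sim.
Proof. by move=> x2 x1 x3 /simP h12 /simP h23; apply/simP => y; rewrite h12. Qed.

Lemma sim_eqr x x' : sim x x' -> sim x =1 sim x'.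
Proof.
move=> xx' z; apply/idP/idP; first by apply: sim_trans; rewrite sim_sym.
exact: sim_trans.
Qed.

Lemma eq_piX x x' : piX p x = piX p x' <-> sim x x'.
Proof.
split=> [/(congr1 val) /= /setP/(_ x')|xx']; first by rewrite !inE sim_refl.
by apply: val_inj; apply/setP => z; rewrite !inE (sim_eqr xx').
Qed.

Definition class_repr (c : Xbar p) : X := xchoose (existsP (valP c)).

Lemma piX_class_repr c : piX p (class_repr c) = c.
Proof. by apply: val_inj; rewrite /= -(eqP (xchooseP (existsP (valP c)))). Qed.

Definition pclass (x : X) : R := \sum_(z | sim x z) pX p z.

Lemma pclass_gt0 x : 0 < pclass x.
Proof.
rewrite /pclass (bigD1 x) ?sim_refl //= ltr_pwDl // sumr_ge0 // => z _.
exact: ltW.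
Qed.

Lemma pclass_le1 x : pclass x <= 1.
Proof.
rewrite -sum_pX [leRHS](bigID (sim x)) /= lerDl sumr_ge0 // => z _; exact: ltW.
Qed.

Lemma pclass_sim x x' : sim x x' -> pclass x = pclass x'.
Proof. by move/sim_eqr => e; apply: eq_bigl. Qed.

Definition class_weight (x z : X) : R := if sim x z then pX p z / pclass x else 0.

Lemma class_weight_ge0 x z : 0 <= class_weight x z.
Proof. by rewrite /class_weight; case: ifP => // _; rewrite divr_ge0 ?ltW ?pclass_gt0. Qed.

Lemma class_weight_sim x x' : sim x x' -> class_weight x =1 class_weight x'.
Proof. by move=> xx' z; rewrite /class_weight (sim_eqr xx') (pclass_sim xx'). Qed.

Lemma class_weight_gt0 x z : 0 < class_weight x z -> sim x z.
Proof. by rewrite /class_weight; case: ifP; rewrite ?ltxx. Qed.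

Lemma class_weightE x (f : X -> R) :
  \sum_z class_weight x z * f z = (\sum_(z | sim x z) pX p z * f z) / pclass x.
Proof.
rewrite mulr_suml [RHS]big_mkcond /=; apply: eq_bigr => z _.
by rewrite /class_weight; case: ifP; rewrite ?mul0r // mulrAC.
Qed.

Lemma sum_class_weight x : \sum_z class_weight x z = 1.
Proof.
rewrite /class_weight -big_mkcond /= -mulr_suml -/(pclass x).
by rewrite divff ?gt_eqF ?pclass_gt0.
Qed.

Lemma sum_pX_class_weight z : \sum_x pX p x * class_weight x z = pX p z.
Proof.
rewrite (eq_bigr (fun x => if sim z x then pX p x * (pX p z / pclass z) else 0)).
  by rewrite -big_mkcond /= -mulr_suml mulrCA divff ?mulr1 ?gt_eqF ?pclass_gt0.
move=> x _; rewrite /class_weight sim_sym.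
by case: ifP => [xz|]; rewrite ?mulr0 // (pclass_sim xz).
Qed.

Lemma class_weight_tower (f : X -> R) :
  \sum_x pX p x * (\sum_z class_weight x z * f z) = \sum_z pX p z * f z.
Proof.
under eq_bigr do rewrite mulr_sumr.
rewrite exchange_big /=; apply: eq_bigr => z _.
by rewrite -sum_pX_class_weight mulr_suml; apply: eq_bigr => x _; rewrite mulrA.
Qed.

Definition class_average (q : X -> nat -> R) (x : X) (t : nat) : R :=
  \sum_z class_weight x z * q z t.

Definition separates_at (q : X -> nat -> R) (t : nat) : bool :=
  [forall x, forall x', (0 < q x t) && (0 < q x' t) ==> sim x x'].

Definition class_invariant_at (q : X -> nat -> R) (t : nat) : bool :=
  [forall x, forall x', sim x x' ==> (q x t == q x' t)].

Definition separating (q : X -> nat -> R) : Prop := forall t, separates_at q t.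

Definition class_invariant (q : X -> nat -> R) : Prop := forall t, class_invariant_at q t.

Lemma separates_atP q t :
  reflect (forall x x', 0 < q x t -> 0 < q x' t -> sim x x') (separates_at q t).
Proof.
apply: (iffP forallP) => [h x x' qx qx'|h x].
  by move/forallP/(_ x')/implyP: (h x); apply; rewrite qx qx'.
by apply/forallP => x'; apply/implyP => /andP[]; exact: h.
Qed.

Lemma class_invariant_atP q t :
  reflect (forall x x', sim x x' -> q x t = q x' t) (class_invariant_at q t).
Proof.
apply: (iffP forallP) => [h x x' xx'|h x].
  by apply/eqP; move/forallP/(_ x')/implyP: (h x); apply.
by apply/forallP => x'; apply/implyP => /h ->.
Qed.

Lemma class_average_invariant q : class_invariant (class_average q).
Proof.
move=> t; apply/class_invariant_atP => x x' xx'.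
by apply: eq_bigr => z _; rewrite (class_weight_sim xx').
Qed.

Lemma class_average_id q t x : class_invariant_at q t -> class_average q x t = q x t.
Proof.
move/class_invariant_atP => qinv; rewrite /class_average.
transitivity (\sum_z class_weight x z * q x t).
  apply: eq_bigr => z _; have [->|wz] := eqVneq (class_weight x z) 0; first by rewrite !mul0r.
  by rewrite (qinv x z) // class_weight_gt0 // lt0r wz class_weight_ge0.
by rewrite -mulr_suml sum_class_weight mul1r.
Qed.

Lemma qT_class_average q t : qT p (class_average q) t = qT p q t.
Proof. exact: class_weight_tower. Qed.

Lemma qTY_class_average q t y : qTY p (class_average q) t y = qTY p q t y.
Proof.
transitivity (\sum_x pX p x * \sum_z class_weight x z * (pcond p z y * q z t)).
  apply: eq_bigr => x _; rewrite pX_pcond -mulrA; congr (_ * _).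
  rewrite /class_average mulr_sumr; apply: eq_bigr => z _.
  have [->|wz] := eqVneq (class_weight x z) 0; first by rewrite !mul0r mulr0.
  have /simP -> : sim x z by apply: class_weight_gt0; rewrite lt0r wz class_weight_ge0.
  by rewrite mulrCA mulrA.
by rewrite class_weight_tower; apply: eq_bigr => z _; rewrite pX_pcond mulrA.
Qed.

Definition kl_cond (x : X) : R := \sum_y plogq (pcond p x y) (pY p y).

Definition MI_TY_term (q : X -> nat -> R) (t : nat) : R :=
  \sum_y plogq (qTY p q t y) (qT p q t * pY p y).

Definition MI_TY_bound (q : X -> nat -> R) (t : nat) : R :=
  \sum_x pX p x * q x t * kl_cond x.

Definition MI_XT_term (q : X -> nat -> R) (t : nat) : R :=
  \sum_x plogq (pX p x * q x t) (pX p x * qT p q t).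

Lemma kl_cond_ge0 x : 0 <= kl_cond x.
Proof.
have := leif_log_sum (P := xpredT) (fun y _ => pcond_ge0 x y) (fun y _ => pY_ge0 y)
  (fun y _ (e : pY p y = 0) => ltac:(by rewrite /pcond (pY_eq0 x e) mul0r)).
by rewrite sum_pcond sum_pY plogqxx => -[].
Qed.

Lemma MI_XY_kl_cond : MI_XY p = \sum_x pX p x * kl_cond x.
Proof.
apply: eq_bigr => x _; rewrite /kl_cond mulr_sumr; apply: eq_bigr => y _.
by rewrite pX_pcond plogqMl ?ltW.
Qed.

Lemma class_invariant_atE q t : class_invariant_at q t =
  [forall x, [forall (z | sim x z), q z t == class_average q x t]].
Proof.
apply/idP/forallP => [q_inv x|h].
  apply/forall_inP => z xz; rewrite class_average_id //.
  by move/class_invariant_atP: q_inv => /(_ x z xz) ->.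
apply/class_invariant_atP => x x' xx'.
move/forall_inP: (h x) => hx.
by rewrite (eqP (hx x (sim_refl x))) (eqP (hx x' xx')).
Qed.

Lemma MI_XT_term_by_class q t : MI_XT_term q t =
  \sum_x pX p x / pclass x * \sum_(z | sim x z) plogq (pX p z * q z t) (pX p z * qT p q t).
Proof.
transitivity (\sum_z pX p z * (plogq (pX p z * q z t) (pX p z * qT p q t) / pX p z)).
  by apply: eq_bigr => z _; rewrite [pX p z * (_ / _)]mulrC divfK ?gt_eqF.
rewrite -class_weight_tower; apply: eq_bigr => x _.
rewrite class_weightE mulrA mulrAC; congr (_ * _).
by apply: eq_bigr => z _; rewrite [pX p z * (_ / _)]mulrC divfK ?gt_eqF.
Qed.

Lemma MI_XT_term_class_average q t : MI_XT_term (class_average q) t =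
  \sum_x pX p x / pclass x *
    plogq (\sum_(z | sim x z) pX p z * q z t) (\sum_(z | sim x z) pX p z * qT p q t).
Proof.
rewrite /MI_XT_term qT_class_average; apply: eq_bigr => x _.
rewrite -plogqMl ?divr_ge0 ?ltW ?pclass_gt0 //.
have pclass_neq0 : pclass x != 0 by rewrite gt_eqF ?pclass_gt0.
congr plogq; first by rewrite /class_average class_weightE; field.
by rewrite -mulr_suml -/(pclass x); field.
Qed.

Section Channel.
Variable q : X -> nat -> R.
Hypothesis q_channel : channel q.

Let q_ge0 := channel_ge0 q_channel.

Lemma qT_ge0 t : 0 <= qT p q t.
Proof. by rewrite sumr_ge0 // => x _; rewrite mulr_ge0 ?q_ge0 ?ltW. Qed.

Lemma qT_eq0 t : qT p q t = 0 -> forall x, q x t = 0.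
Proof.
move=> qT0 x; have pXq_ge0 z : 0 <= pX p z * q z t by rewrite mulr_ge0 ?q_ge0 ?ltW.
have /eqP := psumr_eq0P (fun z _ => pXq_ge0 z) qT0 (i := x) isT.
by rewrite mulf_eq0 gt_eqF //= => /eqP.
Qed.

Lemma qTY_ge0 t y : 0 <= qTY p q t y.
Proof. by rewrite sumr_ge0 // => x _; rewrite mulr_ge0 ?p_ge0 ?q_ge0. Qed.

Lemma sum_qTY t : \sum_y qTY p q t y = qT p q t.
Proof. by rewrite /qTY exchange_big; apply: eq_bigr => x _; rewrite -mulr_suml. Qed.

Lemma qTY_eq0 t y : qT p q t * pY p y = 0 -> qTY p q t y = 0.
Proof.
move/eqP; rewrite mulf_eq0 => /orP[/eqP/qT_eq0 q0|/eqP/pY_eq0 p0];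
  by rewrite /qTY big1 // => x _; rewrite ?q0 ?p0 ?mulr0 ?mul0r.
Qed.

Lemma qTY_separates t x y : separates_at q t -> 0 < q x t ->
  qTY p q t y = qT p q t * pcond p x y.
Proof.
move=> /separates_atP sep qx; rewrite /qTY /qT mulr_suml; apply: eq_bigr => z _.
have [->|qz] := eqVneq (q z t) 0; first by rewrite !mulr0 mul0r.
have /simP zx : sim z x by apply: sep qx; rewrite lt0r qz q_ge0.
by rewrite pX_pcond zx mulrAC.
Qed.

Lemma separates_atE t : separates_at q t =
  [forall y, forall x, (0 < q x t) ==> (pcond p x y * qT p q t == qTY p q t y)].
Proof.
apply/idP/forallP => [sep y|h].
  by apply/forall_inP => x qx; rewrite (qTY_separates y sep qx) mulrC.
apply/separates_atP => x x' qx qx'; apply/simP => y.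
have qT_neq0 : qT p q t != 0 by apply: contraTneq qx => /qT_eq0 ->; rewrite ltxx.
apply: (mulIf qT_neq0); move/forall_inP: (h y) => hy.
by rewrite (eqP (hy x qx)) (eqP (hy x' qx')).
Qed.

Lemma MI_TY_term_ge0 t : 0 <= MI_TY_term q t.
Proof.
have := leif_log_sum (P := xpredT) (fun y _ => qTY_ge0 t y)
  (fun y _ => mulr_ge0 (qT_ge0 t) (pY_ge0 y)) (fun y _ => @qTY_eq0 t y).
by rewrite sum_qTY -mulr_sumr sum_pY mulr1 plogqxx => -[].
Qed.

Lemma leif_MI_TY_term t : MI_TY_term q t <= MI_TY_bound q t ?= iff separates_at q t.
Proof.
pose a y x := pX p x * q x t * pcond p x y.
pose b y x := pX p x * q x t * pY p y.
have leif_y y : plogq (qTY p q t y) (qT p q t * pY p y) <= \sum_x plogq (a y x) (b y x)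
    ?= iff [forall x, (0 < q x t) ==> (pcond p x y * qT p q t == qTY p q t y)].
  have ba x : b y x = 0 -> a y x = 0.
    rewrite /a /b => /eqP; rewrite mulf_eq0 => /orP[/eqP->|/eqP/(pcond_eq0 x)->];
      by rewrite ?mul0r ?mulr0.
  have := leif_log_sum (P := xpredT)
    (fun x _ => mulr_ge0 (mulr_ge0 (ltW (pX_gt0 x)) (q_ge0 x t)) (pcond_ge0 x y))
    (fun x _ => mulr_ge0 (mulr_ge0 (ltW (pX_gt0 x)) (q_ge0 x t)) (pY_ge0 y)) (fun x _ => @ba x).
  have -> : \sum_x a y x = qTY p q t y by apply: eq_bigr => x _; rewrite pX_pcond mulrAC.
  rewrite -mulr_suml -/(qT p q t); congr (Order.leif _ _ _); apply: eq_forallb => x /=.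
  rewrite lt0r q_ge0 andbT; have [->|qx] /= := eqVneq (q x t) 0.
    by rewrite /a /b !(mulr0, mul0r) eqxx.
  have [pY0|pY_neq0] := eqVneq (pY p y) 0.
    have qTY0 : qTY p q t y = 0 by apply: qTY_eq0; rewrite pY0 mulr0.
    by rewrite /a /b pY0 (pcond_eq0 x pY0) qTY0 !(mulr0, mul0r) eqxx.
  have c_neq0 : pX p x * q x t * pY p y != 0 by rewrite !mulf_neq0 ?(gt_eqF (pX_gt0 x)).
  by rewrite -[RHS](inj_eq (mulfI c_neq0)) /a /b; congr (_ == _); ring.
have -> : MI_TY_bound q t = \sum_y \sum_x plogq (a y x) (b y x).
  rewrite exchange_big; apply: eq_bigr => x _; rewrite /kl_cond mulr_sumr.
  by apply: eq_bigr => y _; rewrite plogqMl // mulr_ge0 ?q_ge0 ?ltW.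
rewrite separates_atE.
exact: leif_sum (fun y _ => leif_y y).
Qed.

Lemma MI_TY_bound_series : (\sum_(0 <= t <oo) (MI_TY_bound q t)%:E = (MI_XY p)%:E)%E.
Proof.
rewrite MI_XY_kl_cond -(channel_mixture (c := fun x => pX p x * kl_cond x) q_channel).
  by apply: eq_eseriesr => t _; congr EFin; apply: eq_bigr => x _; rewrite mulrAC.
by move=> x; rewrite mulr_ge0 ?kl_cond_ge0 ?ltW.
Qed.

Lemma MI_TY_le_MI_XY : (MI_TY p q <= (MI_XY p)%:E)%E.
Proof.
rewrite -MI_TY_bound_series; apply: lee_nneseries => [t _ _|t _]; rewrite lee_fin.
  exact: MI_TY_term_ge0.
exact: (leif_MI_TY_term t).1.
Qed.

Lemma MI_TY_separating : separating q -> MI_TY p q = (MI_XY p)%:E.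
Proof.
move=> q_sep; rewrite -MI_TY_bound_series; apply: eq_eseriesr => t _; congr EFin.
exact: eqTleif (leif_MI_TY_term t) (q_sep t).
Qed.

Lemma separating_of_MI_TY : ((MI_XY p)%:E <= MI_TY p q)%E -> separating q.
Proof.
move=> MI_le t; rewrite -(eq_leif (leif_MI_TY_term t)); apply/eqP.
apply: (nneseries_le_eq MI_TY_term_ge0 (fun t => (leif_MI_TY_term t).1)).
  by rewrite MI_TY_bound_series.
exact: le_lt_trans MI_TY_le_MI_XY (ltry _).
Qed.

Lemma class_average_channel : channel (class_average q).
Proof.
split=> [x t|x]; first by rewrite sumr_ge0 // => z _; rewrite mulr_ge0 ?class_weight_ge0.
by rewrite channel_mixture ?sum_class_weight // => z; exact: class_weight_ge0.
Qed.

Lemma class_average_separating : separating q -> separating (class_average q).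
Proof.
have support x t : 0 < class_average q x t -> exists2 z, sim x z & 0 < q z t.
  move=> avg_gt0; apply/exists_inP; apply: contraTT avg_gt0 => /exists_inPn q0.
  rewrite -leNgt /class_average sumr_le0 // => z _.
  have [xz|/negPf zx] := boolP (sim x z).
    by rewrite mulr_ge0_le0 ?class_weight_ge0 // leNgt q0.
  by rewrite /class_weight zx mul0r.
move=> q_sep t; apply/separates_atP => x x' /support[z xz qz] /support[z' x'z' qz'].
have /separates_atP zz' := q_sep t.
by apply: sim_trans xz _; apply: sim_trans (zz' _ _ qz qz') _; rewrite sim_sym.
Qed.

Lemma MI_TY_class_average : MI_TY p (class_average q) = MI_TY p q.
Proof.
apply: eq_eseriesr => t _; congr EFin; apply: eq_bigr => y _.
by rewrite qTY_class_average qT_class_average.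
Qed.

Lemma pX_qT_eq0 t x : pX p x * qT p q t = 0 -> pX p x * q x t = 0.
Proof. by move/eqP; rewrite mulf_eq0 gt_eqF //= => /eqP/qT_eq0 ->; rewrite mulr0. Qed.

Lemma MI_XT_term_ge0 t : 0 <= MI_XT_term q t.
Proof.
have := leif_log_sum (P := xpredT) (fun x _ => mulr_ge0 (ltW (pX_gt0 x)) (q_ge0 x t))
  (fun x _ => mulr_ge0 (ltW (pX_gt0 x)) (qT_ge0 t)) (fun x _ => @pX_qT_eq0 t x).
by rewrite -mulr_suml sum_pX mul1r plogqxx => -[].
Qed.

Lemma leif_MI_XT_class_average t :
  MI_XT_term (class_average q) t <= MI_XT_term q t ?= iff class_invariant_at q t.
Proof.
rewrite MI_XT_term_class_average MI_XT_term_by_class class_invariant_atE.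
apply: leif_sum => x _.
have c_gt0 : 0 < pX p x / pclass x by rewrite divr_gt0 ?pclass_gt0.
rewrite (mono_leif (ler_pM2l c_gt0)).
have := leif_log_sum (P := sim x) (fun z _ => mulr_ge0 (ltW (pX_gt0 z)) (q_ge0 z t))
  (fun z _ => mulr_ge0 (ltW (pX_gt0 z)) (qT_ge0 t)) (fun z _ => @pX_qT_eq0 t z).
congr (Order.leif _ _ _); apply: eq_forallb => z; congr (_ ==> _).
have sumE : \sum_(j | sim x j) pX p j * q j t = pclass x * class_average q x t.
  by rewrite /class_average class_weightE mulrC divfK ?gt_eqF ?pclass_gt0.
rewrite sumE -mulr_suml -/(pclass x).
have [T0|T_neq0] := eqVneq (qT p q t) 0.
  have q0 := qT_eq0 T0; rewrite /class_average big1 => [|j _]; last by rewrite q0 mulr0.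
  by rewrite q0 !(mulr0, mul0r) eqxx.
have c_neq0 : pX p z * pclass x * qT p q t != 0.
  by rewrite !mulf_neq0 ?(gt_eqF (pX_gt0 z)) ?(gt_eqF (pclass_gt0 x)).
by rewrite -[RHS](inj_eq (mulfI c_neq0)); congr (_ == _); ring.
Qed.

Lemma qT_separating_invariant t x : separates_at q t -> class_invariant_at q t ->
  0 < q x t -> qT p q t = pclass x * q x t.
Proof.
move=> /separates_atP q_sep /class_invariant_atP q_inv qx.
rewrite /qT /pclass mulr_suml [RHS]big_mkcond /=; apply: eq_bigr => z _.
case: ifP => [xz|zx]; first by rewrite (q_inv x z xz).
have [->|qz] := eqVneq (q z t) 0; first by rewrite mulr0.
by move: zx; rewrite (q_sep x z qx) // lt0r qz q_ge0.
Qed.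

Lemma MI_XT_separating_invariant : separating q -> class_invariant q ->
  MI_XT p q = (\sum_x pX p x * - ln (pclass x))%:E.
Proof.
move=> q_sep q_inv.
rewrite -(channel_mixture (c := fun x => pX p x * - ln (pclass x)) q_channel).
  apply: eq_eseriesr => t _; congr EFin; apply: eq_bigr => x _.
  have [->|qx] := eqVneq (q x t) 0; first by rewrite !mulr0 plogq0.
  have qx_gt0 : 0 < q x t by rewrite lt0r qx q_ge0.
  rewrite (qT_separating_invariant (q_sep t) (q_inv t) qx_gt0) /plogq.
  rewrite mulf_eq0 gt_eqF //= (negPf qx).
  have -> : pX p x * q x t / (pX p x * (pclass x * q x t)) = (pclass x)^-1.
    by field; rewrite qx !gt_eqF ?pclass_gt0.
  by rewrite lnV ?posrE ?pclass_gt0 //; ring.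
by move=> x; apply: mulr_ge0; [exact: ltW | rewrite oppr_ge0 ln_le0 ?pclass_le1].
Qed.

End Channel.

Lemma MI_XT_class_average_le q : channel q -> (MI_XT p (class_average q) <= MI_XT p q)%E.
Proof.
move=> q_ch; apply: lee_nneseries => [t _ _|t _]; rewrite lee_fin.
  exact: MI_XT_term_ge0 (class_average_channel q_ch) t.
exact: (leif_MI_XT_class_average q_ch t).1.
Qed.

Definition class_label (x : X) (t : nat) : R := (t == enum_rank (piX p x))%:R.

Lemma class_label_channel : channel class_label.
Proof. by split=> [x t|x]; [exact: ler0n | exact: eseries_indicator]. Qed.

Lemma class_label_separating : separating class_label.
Proof.
move=> t; apply/separates_atP => x x'; rewrite /class_label.
case: eqP => [-> _|]; last by rewrite ltxx.
by case: eqP => [/ord_inj/enum_rank_inj/eq_piX|] //; rewrite ltxx.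
Qed.

Lemma class_label_invariant : class_invariant class_label.
Proof. by move=> t; apply/class_invariant_atP => x x' /eq_piX e; rewrite /class_label e. Qed.

Lemma IB_class_invariant lam k : lam <= MI_XY p -> IB p lam k -> class_invariant k.
Proof.
move=> lam_le [k_ch [k_feas k_min]].
have avg_ch := class_average_channel k_ch.
have le_entropy : (MI_XT p k <= MI_XT p class_label)%E.
  apply: k_min; first exact: class_label_channel.
  by rewrite (MI_TY_separating class_label_channel class_label_separating) lee_fin.
have le_avg : (MI_XT p k <= MI_XT p (class_average k))%E.
  by apply: k_min => //; rewrite MI_TY_class_average.
have avg_fin : (MI_XT p (class_average k) < +oo)%E.
  apply: le_lt_trans (MI_XT_class_average_le k_ch) (le_lt_trans le_entropy _).
  by rewrite (MI_XT_separating_invariant class_label_channel class_label_separating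
    class_label_invariant) ltry.
move=> t; rewrite -(eq_leif (leif_MI_XT_class_average k_ch t)); apply/eqP.
apply: (nneseries_le_eq (MI_XT_term_ge0 avg_ch) _ le_avg avg_fin) => s.
exact: (leif_MI_XT_class_average k_ch s).1.
Qed.

Lemma IB_MI_XYP k : IB p (MI_XY p) k <-> [/\ channel k, separating k & class_invariant k].
Proof.
split=> [kIB|[k_ch k_sep k_inv]].
  have [k_ch [k_feas _]] := kIB; split=> //; first exact: separating_of_MI_TY.
  exact: IB_class_invariant (lexx _) kIB.
split=> //; split; first by rewrite MI_TY_separating.
move=> q q_ch /(separating_of_MI_TY q_ch) q_sep.
rewrite (MI_XT_separating_invariant k_ch k_sep k_inv).
rewrite -(MI_XT_separating_invariant (class_average_channel q_ch)
  (class_average_separating q_sep) (@class_average_invariant q)).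
exact: MI_XT_class_average_le.
Qed.

Lemma separating_invariant_factor k :
  [/\ channel k, separating k & class_invariant k] <->
  exists g : Xbar p -> nat -> R, channel g /\ congruent g /\ k = (fun x t => g (piX p x) t).
Proof.
split=> [[k_ch k_sep k_inv]|[g [g_ch [g_cong ->]]]]; last first.
  split=> [|t|t]; first by split=> [x t|x]; [exact: channel_ge0 | exact: channel_mass].
    apply/separates_atP => x x' gx gx'; apply/eq_piX.
    exact: congruent_disjoint_supports gx gx'.
  by apply/class_invariant_atP => x x' /eq_piX ->.
have [x0 _] : exists x : X, true.
  apply/existsP; apply: contraT => /existsPn X0; move: sum_pX.
  by rewrite big1 => [/eqP|x _]; [rewrite eq_sym oner_eq0 | move: (X0 x)].
have g_ch : channel (fun c t => k (class_repr c) t).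
  by split=> [c t|c]; [exact: channel_ge0 | exact: channel_mass].
exists (fun c t => k (class_repr c) t); split=> //; split.
  apply: (congruent_of_disjoint_supports (piX p x0) g_ch) => c c' t kc kc'.
  rewrite -(piX_class_repr c) -(piX_class_repr c'); apply/eq_piX.
  by move/separates_atP: (k_sep t); apply.
apply/funext => x; apply/funext => t; move/class_invariant_atP: (k_inv t); apply.
by rewrite -eq_piX piX_class_repr.
Qed.

Lemma in_GciE s : in_Gci p s <-> forall x, sim (s x) x.
Proof.
split=> [s_inv x|s_sim x y]; first by apply/simP => y; rewrite s_inv.
by move/simP: (s_sim x) => ->.
Qed.

Lemma class_invariant_Gci k s : class_invariant k -> in_Gci p s ->
  (fun x t => k (s x) t) = k.
Proof.
move=> k_inv /in_GciE s_sim; apply/funext => x; apply/funext => t.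
by move/class_invariant_atP: (k_inv t); apply.
Qed.

Lemma IB_MI_XY_Gci s k : IB p (MI_XY p) k -> in_Gci p s <-> (fun x t => k (s x) t) = k.
Proof.
case/IB_MI_XYP => k_ch k_sep k_inv; split; first exact: class_invariant_Gci.
move=> ks; apply/in_GciE => x; have [t kx] := channel_support k_ch (s x).
move/separates_atP: (k_sep t); apply=> //.
by rewrite -[X in _ < X](congr1 (fun f => f x t) ks).
Qed.

Lemma piX_Gci_orbit x x' : piX p x = piX p x' <-> exists s, in_Gci p s /\ s x = x'.
Proof.
rewrite eq_piX; split=> [xx'|[s [/in_GciE s_sim <-]]]; last by rewrite sim_sym.
exists (tperm x x'); split; last exact: tpermL.
apply/in_GciE => z; case: tpermP => [->|->|_ _]; rewrite ?sim_refl //.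
by rewrite sim_sym.
Qed.

End InformationBottleneck.

Theorem theorem1 (R : realType) (X Y : finType) (p : X -> Y -> R) :
  is_joint p -> (forall x, 0 < pX p x) ->
  let Lam := MI_XY p in
  (* (i) *)
  (forall k : X -> nat -> R,
     IB p Lam k <->
     exists g : Xbar p -> nat -> R,
       channel g /\ congruent g /\ k = (fun x t => g (piX p x) t)) /\
  (* (ii) *)
  (forall (s : {perm X}) (k : X -> nat -> R),
     IB p Lam k -> (in_Gci p s <-> (fun x t => k (s x) t) = k)) /\
  (* (iii) *)
  (forall s : {perm X}, in_Gci p s ->
     forall lam : R, 0 <= lam <= Lam ->
     forall k : X -> nat -> R, IB p lam k -> (fun x t => k (s x) t) = k) /\
  (* (iv) *)
  (forall x x' : X,
     piX p x = piX p x' <-> exists s : {perm X}, in_Gci p s /\ s x = x').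
Proof.
move=> p_joint pX_gt0 Lam; split; [|split; [|split]].
- move=> k; apply: iff_trans (IB_MI_XYP p_joint pX_gt0 k) _.
  exact: separating_invariant_factor.
- exact: IB_MI_XY_Gci.
- move=> s s_Gci lam /andP[_ lam_le] k kIB.
  exact: class_invariant_Gci (IB_class_invariant p_joint pX_gt0 lam_le kIB) s_Gci.
- exact: piX_Gci_orbit.
Qed.
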